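(* Let $\theta:H\to H$ be an endomorphism. Then the zero hyperideal $\{0\}$ is a $\theta$-maximal hyperideal of $H$ if and only if $\operatorname{Max}(H)=\{\operatorname{Ker}\theta\}$.
   Context: Throughout, $(H,h,k)$ is a commutative Krasner $(m,n)$-hyperring with scalar identity $1_H$: $(H,h)$ is a canonical $m$-ary hypergroup (a commutative associative $m$-ary hyperoperation $h:H^m\to\mathcal P^*(H)$ with a unique zero $0$ such that $h(u,0^{(m-1)})=\{u\}$, unique inverses, reversibility), $k:H^n\to H$ is a commutative associative $n$-ary operation distributing over $h$ in each argument, $k(0,u_2^n)=0$, and $k(u,1_H^{(n-1)})=u$ for all $u$. A hyperideal is a nonempty $I\subseteq H$ such that $(I,h)$ is an $m$-ary subhypergroup and $k(u_1^{i-1},I,u_{i+1}^n)\subseteq I$ for all $u_j\in H$. $\operatorname{Max}(H)$ is the set of maximal hyperideals (proper hyperideals $M$ such that $M\subseteq I$ for a hyperideal $I$ implies $I=M$ or $I=H$). An endomorphism is a map $\theta$ with $\theta(h(u_1^m))=h(\theta(u_1),\dots,\theta(u_m))$, $\theta(k(u_1^n))=k(\theta(u_1),\dots,\theta(u_n))$, $\theta(1_H)=1_H$; $\operatorname{Ker}\theta=\{u:\theta(u)=0\}$. A proper hyperideal $M$ is $\theta$-maximal if for every hyperideal $E$ with $M\subseteq E$, either $\theta(E)\subseteq M$ or $E=H$. *)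

From mathcomp Require Import all_boot.
From Stdlib Require Import Permutation.
Set Implicit Arguments. Unset Strict Implicit. Unset Printing Implicit Defensive.

(* An m-ary hyperoperation H^m -> P*(H) is encoded as a function on sequences;
   only its values on sequences of size m are ever used. *)
Definition hyperop (H : Type) := seq H -> H -> Prop.

Definition ins (H : Type) (i : nat) (x : H) (s : seq H) := take i s ++ x :: drop i s.

(* h(x_1^{i}, h(x_{i+1}^{i+m}), x_{i+m+1}^{2m-1}) as a set (i 0-based) *)
Definition hassoc (H : Type) (m : nat) (h : hyperop H) (i : nat) (s : seq H) (y : H) :=
  exists w, h (take m (drop i s)) w /\ h (take i s ++ w :: drop (i + m) s) y.

Definition kassoc (H : Type) (n : nat) (k : seq H -> H) (i : nat) (s : seq H) :=
  k (take i s ++ k (take n (drop i s)) :: drop (i + n) s).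

Definition canonical_mhypergroup (H : Type) (m : nat) (h : hyperop H) (z : H)
    (inv : H -> H) : Prop :=
  (forall s, size s = m -> exists y, h s y) /\
  (forall s, size s = (2 * m).-1 -> forall i j, i < m -> j < m ->
      forall y, hassoc m h i s y <-> hassoc m h j s y) /\
  (forall s s', size s = m -> Permutation s s' -> forall y, h s y <-> h s' y) /\
  (forall u y, h (u :: nseq m.-1 z) y <-> y = u) /\
  (forall z', (forall u y, h (u :: nseq m.-1 z') y <-> y = u) -> z' = z) /\
  (forall x, h (x :: inv x :: nseq (m - 2) z) z) /\
  (forall x x', h (x :: x' :: nseq (m - 2) z) z -> x' = inv x) /\
  (* reversibility: x in h(x_1^m) implies x_i in h(-x_1,..,-x_{i-1},x,-x_{i+1},..,-x_m) *)
  (forall s x, size s = m -> h s x -> forall i, i < m ->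
      h (set_nth z (map inv s) i x) (nth z s i)).

Definition krasner_hyperring (H : Type) (m n : nat) (h : hyperop H) (k : seq H -> H)
    (z : H) (inv : H -> H) (one : H) : Prop :=
  2 <= m /\ 2 <= n /\
  canonical_mhypergroup m h z inv /\
  (forall s s', size s = n -> Permutation s s' -> k s = k s') /\
  (forall s, size s = (2 * n).-1 -> forall i j, i < n -> j < n ->
      kassoc n k i s = kassoc n k j s) /\
  (forall s a, size s = n.-1 -> size a = m -> forall i, i < n ->
      forall y, (exists w, h a w /\ y = k (ins i w s)) <->
                h (map (fun aj => k (ins i aj s)) a) y) /\
  (forall s, size s = n.-1 -> k (z :: s) = z) /\
  (forall u, k (u :: nseq n.-1 one) = u).

(* hyperideal: (I,h) an m-ary subhypergroup (nonempty, closed, reproductive)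
   absorbing k in each argument *)
Definition hyperideal (H : Type) (m n : nat) (h : hyperop H) (k : seq H -> H)
    (I : H -> Prop) : Prop :=
  (exists x, I x) /\
  (forall s, size s = m -> (forall x, List.In x s -> I x) -> forall y, h s y -> I y) /\
  (forall s, size s = m.-1 -> (forall x, List.In x s -> I x) -> forall i, i < m ->
      forall y, I y <-> exists x, I x /\ h (ins i x s) y) /\
  (forall s, size s = n.-1 -> forall i, i < n -> forall x, I x -> I (k (ins i x s))).

Definition proper (H : Type) (I : H -> Prop) : Prop := exists x, ~ I x.

Definition maximal_hyperideal (H : Type) (m n : nat) (h : hyperop H) (k : seq H -> H)
    (M : H -> Prop) : Prop :=
  hyperideal m n h k M /\ proper M /\
  forall I, hyperideal m n h k I -> (forall x, M x -> I x) ->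
    (forall x, I x <-> M x) \/ (forall x, I x).

Definition endomorphism (H : Type) (m n : nat) (h : hyperop H) (k : seq H -> H)
    (one : H) (theta : H -> H) : Prop :=
  (forall s, size s = m -> forall y, (exists x, h s x /\ y = theta x) <-> h (map theta s) y) /\
  (forall s, size s = n -> theta (k s) = k (map theta s)) /\
  theta one = one.

Definition theta_maximal (H : Type) (m n : nat) (h : hyperop H) (k : seq H -> H)
    (theta : H -> H) (M : H -> Prop) : Prop :=
  hyperideal m n h k M /\ proper M /\
  forall E, hyperideal m n h k E -> (forall x, M x -> E x) ->
    (forall x, E x -> M (theta x)) \/ (forall x, E x).

From Pilot Require Import Defs.
From mathcomp Require Import all_boot zify boolp classical_sets.
From Stdlib Require Import Permutation.
Set Implicit Arguments. Unset Strict Implicit. Unset Printing Implicit Defensive.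

(* If {0} is theta-maximal, testing the definition on {0} itself gives theta 0 = 0, so Ker theta
   is a hyperideal, proper because theta 1 = 1 <> 0; theta-maximality of {0} then says that every
   hyperideal lies in Ker theta or is all of H.  Hence Ker theta is maximal, and every maximal
   hyperideal, lying in Ker theta, equals it.  Conversely, if Ker theta is the only maximal
   hyperideal, every proper hyperideal E lies in a maximal one (Zorn's lemma applied to the
   hyperideals containing E and avoiding 1), i.e. in Ker theta, so theta(E) is contained in {0}. *)

Local Open Scope classical_set_scope.

Section Insert.
Variable T : Type.
Implicit Types (x y c : T) (s : seq T).

Lemma ins0 x s : ins 0 x s = x :: s.
Proof. by rewrite /ins take0 drop0. Qed.

Lemma ins_cons i x y s : ins i.+1 x (y :: s) = y :: ins i x s.
Proof. by []. Qed.

Lemma ins_nil i x : ins i x [::] = [:: x].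
Proof. by case: i. Qed.

Lemma perm_ins i x s : Permutation (ins i x s) (x :: s).
Proof.
elim: s i => [|y s IHs] [|i]; rewrite ?ins0 ?ins_nil ?ins_cons //.
exact: perm_trans (perm_skip y (IHs i)) (perm_swap x y s).
Qed.

Lemma size_ins i x s : size (ins i x s) = (size s).+1.
Proof. by elim: s i => [|y s IHs] [|i] //=; rewrite ?ins0 ?ins_cons /= ?IHs. Qed.

Lemma In_ins i x y s : List.In y (ins i x s) <-> y = x \/ List.In y s.
Proof.
split=> [/(Permutation_in _ (perm_ins i x s)) [->|]|yxs]; [by left|by right|].
apply: Permutation_in (Permutation_sym (perm_ins i x s)) _.
by case: yxs => [->|]; [left|right].
Qed.

Lemma map_ins (U : Type) (f : T -> U) i x s : map f (ins i x s) = ins i (f x) (map f s).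
Proof. by rewrite /ins map_cat map_take /= map_drop. Qed.

Lemma nth_ins d i x s : i <= size s -> nth d (ins i x s) i = x.
Proof. by elim: s i => [|y s IHs] [|i] //= ?; rewrite ?ins0 ?ins_cons //= IHs. Qed.

Lemma set_nth_ins d i x y s : i <= size s -> set_nth d (ins i x s) i y = ins i y s.
Proof. by elim: s i => [|w s IHs] [|i] //= ?; rewrite ?ins0 ?ins_cons //= IHs. Qed.

Lemma Permutation_size s1 s2 : Permutation s1 s2 -> size s1 = size s2.
Proof. by elim=> //= [x s1' s2' _ -> | s1' s2' s3 _ -> _ ->]. Qed.

Lemma all_eq_nseq c s : (forall x, List.In x s -> x = c) -> s = nseq (size s) c.
Proof.
elim: s => //= y s IHs sc; rewrite (sc y (or_introl erefl)) -IHs // => x xs.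
by apply: sc; right.
Qed.

End Insert.

Lemma map_eq_nseq (T U : Type) (f : T -> U) (u : U) s :
  (forall x : T, List.In x s -> f x = u) -> map f s = nseq (size s) u.
Proof.
move=> fc; rewrite (@all_eq_nseq _ u (map f s)) ?size_map // => _ /List.in_map_iff [x [<-]].
exact: fc.
Qed.

Lemma In_bigcup_chain (T : Type) (F : set (set T)) x s : total_on F subset ->
  (forall y, List.In y (x :: s) -> (\bigcup_(X in F) X) y) ->
  exists2 X, F X & forall y, List.In y (x :: s) -> X y.
Proof.
move=> Ftot; elim: s x => [|w s IHs] x sF.
  by have [X FX Xx] := sF x (or_introl erefl); exists X => // y [<-|].
have [Y FY Yx] := sF x (or_introl erefl).
have [|X FX Xs] := IHs w; first by move=> y ys; apply: sF; right.
have [XY|YX] := Ftot _ _ FX FY.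
  by exists Y => // y [<-|/Xs/XY].
by exists X => // y [<-|/Xs]; [apply: YX|].
Qed.

Section KrasnerHyperring.
Variables (H : Type) (m n : nat) (h : hyperop H) (k : seq H -> H).
Variables (z : H) (inv : H -> H) (one : H).
Hypothesis hK : krasner_hyperring m n h k z inv one.
Local Notation hyperideal := (hyperideal m n h k).
Local Notation maximal_hyperideal := (maximal_hyperideal m n h k).

Let m_ge2 : 2 <= m. Proof. by case: hK. Qed.
Let n_ge2 : 2 <= n. Proof. by case: hK => _ []. Qed.
Let predn_SS : n.-1 = (n - 2).+1. Proof. lia. Qed.

Lemma h_nseq0 y : h (nseq m z) y <-> y = z.
Proof.
have [_ [_ [[_ [_ [_ [h0 _]]]] _]]] := hK.
by rewrite -(prednK (ltnW m_ge2)); apply: h0.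
Qed.

Lemma h_all0 s y : size s = m -> (forall x, List.In x s -> x = z) -> h s y <-> y = z.
Proof. by move=> sm s0; rewrite (all_eq_nseq s0) sm; exact: h_nseq0. Qed.

Lemma k_zero_In s : size s = n -> List.In z s -> k s = z.
Proof.
have [_ [_ [_ [kC [_ [_ [k0 _]]]]]]] := hK.
move=> sn /(List.in_split z s) [l1 [l2 es]]; rewrite es in sn *.
have zl : Permutation (l1 ++ z :: l2)%list (z :: l1 ++ l2)%list.
  exact/Permutation_sym/Permutation_middle.
have := Permutation_size zl; rewrite sn => /= sz.
by rewrite (kC _ _ sn zl) k0 // sz.
Qed.

Lemma invK : involutive inv.
Proof.
have [_ [_ [[_ [_ [hC [_ [_ [hinv [hinvu _]]]]]]] _]]] := hK.
move=> x; symmetry; apply: hinvu.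
by apply/(hC _ _ _ (perm_swap _ _ _)); [rewrite /= size_nseq; lia | exact: hinv].
Qed.

Lemma h_ins_inv s i x y : size s = m.-1 -> i < m ->
  h (ins i y (map inv s)) x -> h (ins i x s) y.
Proof.
have [_ [_ [[_ [_ [_ [_ [_ [_ [_ hrev]]]]]]] _]]] := hK.
move=> sm im hx.
have sz : size (ins i y (map inv s)) = m by rewrite size_ins size_map sm; lia.
have ileq : i <= size s by rewrite sm; lia.
have := hrev _ _ sz hx i im.
by rewrite map_ins (mapK invK) set_nth_ins ?nth_ins ?size_map.
Qed.

Lemma mem_hyperideal0 I : hyperideal I -> I z.
Proof.
move=> [[x Ix] [_ [_ Iabs]]].
have := Iabs (nseq n.-1 z) (size_nseq _ _) 0 (ltnW n_ge2) x Ix.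
rewrite ins0 k_zero_In //; first by rewrite /= size_nseq; lia.
by apply/List.in_cons; rewrite predn_SS; exact: List.in_eq.
Qed.

Lemma hyperideal_one_full I : hyperideal I -> I one -> forall u, I u.
Proof.
have [_ [_ [_ [kC [_ [_ [_ k1]]]]]]] := hK.
move=> [_ [_ [_ Iabs]]] I1 u.
have sz : size (u :: nseq (n - 2) one) = n.-1 by rewrite /= size_nseq; lia.
have := Iabs _ sz 0 (ltnW n_ge2) one I1; rewrite ins0.
rewrite (kC _ (u :: nseq n.-1 one)) ?k1 //; first by rewrite /= size_nseq; lia.
by rewrite predn_SS; exact: perm_swap.
Qed.

Lemma hyperideal_properP I : hyperideal I -> Defs.proper I <-> ~ I one.
Proof.
move=> II; split=> [[x Ix] I1 | I1]; last by exists one.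
by apply: Ix; exact: hyperideal_one_full I1 x.
Qed.

Lemma hyperideal_zero : hyperideal [set z].
Proof.
split; first by exists z.
split; first by move=> s sm s0 y /(h_all0 _ sm s0).
split=> [s sm s0 i im y | s sn i ik x ->]; last first.
  by apply: k_zero_In; [rewrite size_ins sn; lia | apply/In_ins; left].
have ins0P x : x = z -> forall y, h (ins i x s) y <-> y = z.
  move=> -> {}y; apply: h_all0 => [|w /In_ins [|/s0] //].
  by rewrite size_ins sm; lia.
split=> [-> | [x [xz /(ins0P x xz)]] //].
by exists z; split=> //; exact/(ins0P z erefl).
Qed.

Lemma hyperideal_bigcup (F : set (set H)) :
  (forall X, F X -> X !=set0 -> hyperideal X) -> total_on F subset ->
  \bigcup_(X in F) X !=set0 -> hyperideal (\bigcup_(X in F) X).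
Proof.
move=> FI Ftot U0.
have chain x s : (forall y, List.In y (x :: s) -> (\bigcup_(X in F) X) y) ->
    exists2 X, F X /\ hyperideal X & forall y, List.In y (x :: s) -> X y.
  move=> /(In_bigcup_chain Ftot) [X FX Xs]; exists X => //.
  by split=> //; apply: FI => //; exists x; apply: Xs; left.
have consF x s : (\bigcup_(X in F) X) x ->
    (forall y, List.In y s -> (\bigcup_(X in F) X) y) ->
    forall y, List.In y (x :: s) -> (\bigcup_(X in F) X) y.
  by move=> xF sF y [<-|/sF].
split=> //; split.
  move=> [|x s] sm; first by move: m_ge2; rewrite -sm.
  move=> sF y hy; have [X [FX [_ [Xh _]]] Xs] := chain x s sF.
  by exists X; [|exact: Xh _ sm Xs _ hy].
split.
  move=> s sm sF i im y; split.
  - move=> yF; have [X [FX [_ [_ [Xrep _]]]] Xys] := chain y s (consF y s yF sF).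
    have Xs w (ws : List.In w s) : X w by apply: Xys; right.
    have [x [Xx hx]] := (Xrep s sm Xs i im y).1 (Xys y (or_introl erefl)).
    by exists x; split=> //; exists X.
  - move=> [x [xF hx]]; have [X [FX [_ [_ [Xrep _]]]] Xxs] := chain x s (consF x s xF sF).
    have Xs w (ws : List.In w s) : X w by apply: Xxs; right.
    exists X => //; apply/(Xrep s sm Xs i im y).
    by exists x; split=> //; apply: Xxs; left.
move=> s sn i ik x [X FX Xx]; exists X => //.
by have [_ [_ [_ Xabs]]] := FI X FX (ex_intro _ x Xx); exact: Xabs.
Qed.

Lemma exists_maximal_hyperideal E : hyperideal E -> Defs.proper E ->
  exists2 M, maximal_hyperideal M & E `<=` M.
Proof.
move=> IE /(hyperideal_properP IE) E1.
pose good A := [/\ hyperideal A, E `<=` A & ~ A one].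
(* Zorn_bigcup also quantifies over the empty chain, whose union is empty. *)
have [A [Agood Amax]] :
    exists A, (A !=set0 -> good A) /\ forall B, A `<` B -> ~ (B !=set0 -> good B).
  apply: Zorn_bigcup => F Fgood Ftot U0; have [x [X FX Xx]] := U0.
  split.
  - by apply: hyperideal_bigcup => // Y /Fgood/[apply] -[].
  - have [_ EX _] := Fgood X FX (ex_intro _ x Xx).
    by move=> y Ey; exists X => //; exact: EX.
  - by move=> [Y FY Y1]; have [_ _] := Fgood Y FY (ex_intro _ one Y1); apply.
have [A0|A0] := pselect (A !=set0); last first.
  exfalso; apply: (Amax E); last by move=> _; split.
  split=> [x Ax | EA]; first by exfalso; apply: A0; exists x.
  by have [x Ex] := IE.1; apply: A0; exists x; exact: EA.
have [IA EA A1] := Agood A0.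
exists A => //; split=> //; split; first exact/(hyperideal_properP IA).
move=> I II AI; have [I1|I1] := pselect (I one).
  by right; exact: hyperideal_one_full II I1.
left; have [IA'|IA'] := pselect (I `<=` A).
  by move=> x; split; [apply: IA' | apply: AI].
exfalso; apply: (Amax I) => // _.
by split=> // x /EA /AI.
Qed.

End KrasnerHyperring.

Section Endomorphism.
Variables (H : Type) (m n : nat) (h : hyperop H) (k : seq H -> H).
Variables (z : H) (inv : H -> H) (one : H) (theta : H -> H).
Hypothesis hK : krasner_hyperring m n h k z inv one.
Hypothesis hth : endomorphism m n h k one theta.
Local Notation hyperideal := (hyperideal m n h k).
Local Notation maximal_hyperideal := (maximal_hyperideal m n h k).
Local Notation ker := (theta @^-1` [set z]).

Let m_ge2 : 2 <= m. Proof. by case: hK. Qed.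

Lemma endo_h s x : size s = m -> h s x -> h (map theta s) (theta x).
Proof. by case: hth => thh _ sm hx; apply/(thh s sm); exists x. Qed.

Lemma ker_h_closed s y :
  size s = m -> (forall x, List.In x s -> theta x = z) -> h s y -> theta y = z.
Proof. by move=> sm sK /(endo_h sm); rewrite (map_eq_nseq sK) sm (h_nseq0 hK). Qed.

Lemma ker_inv a : theta z = z -> theta a = z -> theta (inv a) = z.
Proof.
have [_ [_ [[_ [_ [hC [h0 [_ [hinv _]]]]]] _]]] := hK.
move=> th0 tha.
have sz : size (a :: inv a :: nseq (m - 2) z) = m by rewrite /= size_nseq; lia.
have := endo_h sz (hinv a); rewrite /= map_nseq th0 tha => hz.
apply/esym/h0; have -> : m.-1 = (m - 2).+1 by lia.
have szi : size (theta (inv a) :: z :: nseq (m - 2) z) = m by rewrite /= size_nseq; lia.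
exact/(hC _ _ szi (perm_swap _ _ _)).
Qed.

Lemma ker_hyperideal : theta z = z -> hyperideal ker.
Proof.
have [_ [_ [[hne _] [_ [_ [_ [k0 _]]]]]]] := hK.
have [_ [thk _]] := hth.
move=> th0; split; first by exists z.
split; first by move=> s sm sK y; exact: ker_h_closed.
split=> [s sm sK i im y | s sn i ik x thx]; last first.
  rewrite /= thk ?size_ins ?sn; last by lia.
  rewrite map_ins thx; apply: (k_zero_In hK); last by apply/In_ins; left.
  by rewrite size_ins size_map sn; lia.
have insK x : theta x = z -> forall w, List.In w (ins i x s) -> theta w = z.
  by move=> thx w /In_ins [->|/sK].
have szs x : size (ins i x s) = m by rewrite size_ins sm; lia.
split=> [thy | [x [thx hx]]]; last exact: ker_h_closed (szs x) (insK x thx) hx.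
have szi : size (ins i y (map inv s)) = m by rewrite size_ins size_map sm; lia.
have [x hx] := hne _ szi.
exists x; split; last exact: (h_ins_inv hK) hx.
apply: ker_h_closed szi _ hx => w /In_ins [-> //|/List.in_map_iff [v [<- /sK]]].
exact: ker_inv.
Qed.

Section ThetaMaximalZero.
Hypothesis hmax : theta_maximal m n h k theta [set z].

Let ker_or_full E : hyperideal E -> E `<=` ker \/ (forall x, E x).
Proof.
move=> IE; have [_ [_ hE]] := hmax.
by apply: hE => // x /= ->; exact: (mem_hyperideal0 hK).
Qed.

Let theta0 : theta z = z.
Proof.
have [_ [[x xz] _]] := hmax.
by have [/(_ z erefl)|/(_ x)] := ker_or_full (hyperideal_zero hK).
Qed.

Let one_neq0 : ~ [set z] one.
Proof. by have [I0 [P0 _]] := hmax; exact/(hyperideal_properP hK I0). Qed.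

Lemma theta_maximal0_ker_maximal : maximal_hyperideal ker.
Proof.
have [_ [_ th1]] := hth.
split; first exact: ker_hyperideal theta0.
split; first by exists one; rewrite /= th1.
move=> I II KI; have [IK|] := ker_or_full II; last by right.
by left=> x; split; [apply: IK | apply: KI].
Qed.

Lemma theta_maximal0_maximal_ker M : maximal_hyperideal M -> M = ker.
Proof.
move=> [IM [[x Mx] Mmax]].
have [MK|/(_ x)] := ker_or_full IM; last by [].
have [KM|Kfull] := Mmax _ (ker_hyperideal theta0) MK.
  by apply/predeqP => y; split; [apply: MK | move/KM].
have [_ [_ th1]] := hth; case: one_neq0; rewrite /= -th1; exact: Kfull.
Qed.

End ThetaMaximalZero.

Lemma theta_maximal0_of_maximal_ker :
  (forall M, maximal_hyperideal M <-> M = ker) -> theta_maximal m n h k theta [set z].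
Proof.
move=> maxE; have [IK [[x0 Kx0] _]] := (maxE ker).2 erefl.
have th0 : theta z = z := mem_hyperideal0 hK IK.
split; first exact: hyperideal_zero hK.
split; first by exists x0 => /= x0z; apply: Kx0; rewrite /= x0z.
move=> E IE _; have [Efull|/existsNP PE] := pselect (forall x, E x); first by right.
left; have [M /maxE -> EM] := exists_maximal_hyperideal hK IE PE.
exact: EM.
Qed.

End Endomorphism.

Theorem mainTheorem18 (H : Type) (m n : nat) (h : hyperop H) (k : seq H -> H)
    (z : H) (inv : H -> H) (one : H)
    (hK : krasner_hyperring m n h k z inv one)
    (theta : H -> H) (hth : endomorphism m n h k one theta) :
  theta_maximal m n h k theta (fun x => x = z) <->
  (forall M : H -> Prop, maximal_hyperideal m n h k M <-> (forall x, M x <-> theta x = z)).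
Proof.
split=> [hmax M | maxE].
  split=> [/(theta_maximal0_maximal_ker hK hth hmax) -> // | /predeqP ->].
  exact: theta_maximal0_ker_maximal hK hth hmax.
apply: (theta_maximal0_of_maximal_ker hK) => M.
by split=> [/maxE/predeqP | /predeqP/maxE].
Qed.
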